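(* Let $\Omega\subset\mathbb{R}^n$ be a bounded open set, and let $\varpi,\varpi_1$ be oscillation functions such that $\varpi$ is concave in a neighborhood of the origin and $\lim_{r\to0}\varpi_1(r)/\varpi(r)=0$. Then $D_{\varpi_1}(\overline{\Omega})$ is not dense in $D_{\varpi}(\overline{\Omega})$ (with respect to the norm $\|\cdot\|_{\varpi}$).
   Context: An oscillation function is a real, continuous, non-decreasing function $\varpi$ defined on $[0,R)$ for some $R>0$, with $\varpi(0)=0$ and $\varpi(r)>0$ for $r>0$. For $f\in C(\overline{\Omega})$ and $r>0$ set $\omega_f(r)=\sup\{|f(x)-f(y)|:\ x,y\in\Omega,\ 0<|x-y|\le r\}$. Define $[f]_{\varpi}=\sup_{0<r<R}\omega_f(r)/\varpi(r)$, $D_{\varpi}(\overline{\Omega})=\{f\in C(\overline{\Omega}): [f]_{\varpi}<\infty\}$, with norm $\|f\|_{\varpi}=[f]_{\varpi}+\sup_{\overline{\Omega}}|f|$. Note $D_{\varpi_1}(\overline{\Omega})\subset D_{\varpi}(\overline{\Omega})$ under the hypothesis. *)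

From HB Require Import structures.
From mathcomp Require Import all_boot all_order all_algebra.
From mathcomp Require Import all_classical all_reals all_analysis.
Set Implicit Arguments. Unset Strict Implicit. Unset Printing Implicit Defensive.
Import Order.TTheory GRing.Theory Num.Theory.
Import numFieldNormedType.Exports.
Local Open Scope classical_set_scope.
Local Open Scope ring_scope.

Definition eucl (R : realType) (n : nat) (x : 'rV[R]_n) : R :=
  Num.sqrt (\sum_(i < n) x ord0 i ^+ 2).

Definition bounded_eucl (R : realType) (n : nat) (A : set 'rV[R]_n) : Prop :=
  exists M : R, forall x, A x -> eucl x <= M.

Definition oscillation_function (R : realType) (R0 : R) (w : R -> R) : Prop :=
  [/\ 0 < R0,
      {within [set r | 0 <= r < R0], continuous w},
      (forall r s, 0 <= r -> r <= s -> s < R0 -> w r <= w s),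
      w 0 = 0 &
      (forall r, 0 < r -> r < R0 -> 0 < w r)].

Definition concave_near0 (R : realType) (w : R -> R) : Prop :=
  exists d : R, 0 < d /\
    forall x y t : R, 0 <= x < d -> 0 <= y < d -> 0 <= t <= 1 ->
      t * w x + (1 - t) * w y <= w (t * x + (1 - t) * y).

Local Open Scope ereal_scope.

Definition osc (R : realType) (n : nat) (Om : set 'rV[R]_n)
    (f : 'rV[R]_n -> R) (r : R) : \bar R :=
  ereal_sup [set e | exists x y, [/\ Om x, Om y,
      (0 < eucl (x - y))%R, (eucl (x - y) <= r)%R & e = (`|f x - f y|)%:E]].

Definition wsemi (R : realType) (n : nat) (Om : set 'rV[R]_n)
    (R0 : R) (w : R -> R) (f : 'rV[R]_n -> R) : \bar R :=
  ereal_sup [set e | exists r : R, [/\ (0 < r)%R, (r < R0)%R &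
      e = osc Om f r * ((w r)^-1)%:E]].

Definition supnorm (R : realType) (n : nat) (Om : set 'rV[R]_n)
    (f : 'rV[R]_n -> R) : \bar R :=
  ereal_sup [set e | exists x, closure Om x /\ e = (`|f x|)%:E].

Definition Dspace (R : realType) (n : nat) (Om : set 'rV[R]_n)
    (R0 : R) (w : R -> R) (f : 'rV[R]_n -> R) : Prop :=
  {within closure Om, continuous f} /\ wsemi Om R0 w f < +oo.

Definition wnorm (R : realType) (n : nat) (Om : set 'rV[R]_n)
    (R0 : R) (w : R -> R) (f : 'rV[R]_n -> R) : \bar R :=
  wsemi Om R0 w f + supnorm Om f.

Definition Ddense (R : realType) (n : nat) (Om : set 'rV[R]_n)
    (R0 : R) (w : R -> R) (R1 : R) (w1 : R -> R) : Prop :=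
  forall f, Dspace Om R0 w f -> forall eps : R, (0 < eps)%R ->
    exists g, Dspace Om R1 w1 g /\ wnorm Om R0 w (fun x => f x - g x)%R < eps%:E.

From HB Require Import structures.
From mathcomp Require Import all_boot all_order all_algebra.
From mathcomp Require Import all_classical all_reals all_analysis.
From mathcomp Require Import lra.
Import Order.TTheory GRing.Theory Num.Theory.
Import numFieldNormedType.Exports.
Local Open Scope classical_set_scope.
Local Open Scope ring_scope.
Set Implicit Arguments. Unset Strict Implicit. Unset Printing Implicit Defensive.

(* Fix x0 in Om and a coordinate i, and let f x = w (clamp m ((x - x0)_i)),
   i.e. w applied to the i-th coordinate of x - x0 truncated to [0, m]. Near 0 the
   modulus w is concave, nondecreasing and vanishes at 0, so |w s - w t| <= w |s - t|;
   hence [f]_w <= 1 and f lies in D_w. But along x1 = x0 + r e_i the function f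
   increases by w r, whereas any g in D_w1 changes by at most K w1 r = o(w r). So
   [f - g]_w >= 1/2 for every g in D_w1. *)

Section ConcaveModulus.
Variables (R : realFieldType) (w : R -> R) (d : R).
Hypothesis w_concave : forall x y t, 0 <= x < d -> 0 <= y < d -> 0 <= t <= 1 ->
  t * w x + (1 - t) * w y <= w (t * x + (1 - t) * y).
Hypothesis w0 : w 0 = 0.

Lemma concave_subadditive a b : 0 <= b -> b <= a -> a < d -> w a <= w b + w (a - b).
Proof.
move=> b_ge0 b_lea a_ltd; have [a_gt0|a_le0] := ltP 0 a; last first.
  have a0 : a = 0 by apply/le_anti/andP; split; lra.
  have b0 : b = 0 by apply/le_anti/andP; split; lra.
  by rewrite a0 b0 subrr w0 addr0.
have a_neq0 : a != 0 by rewrite gt_eqF.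
have a_in : 0 <= a < d by apply/andP; split; lra.
have zero_in : (0 : R) <= 0 < d by rewrite lexx; lra.
(* interpolate between 0 and a: b = (b / a) * a and a - b = (1 - b / a) * a *)
have t_in : 0 <= b / a <= 1.
  by rewrite divr_ge0 ?(ltW a_gt0) //= ler_pdivrMr // mul1r.
have t'_in : 0 <= 1 - b / a <= 1 by case/andP: t_in => ? ?; apply/andP; split; lra.
have := w_concave a_in zero_in t_in; have := w_concave a_in zero_in t'_in.
have -> : (1 - b / a) * a = a - b by rewrite mulrBl mul1r mulfVK.
rewrite w0 !mulr0 !addr0 mulfVK //; lra.
Qed.

Hypothesis w_mono : forall r s, 0 <= r -> r <= s -> s < d -> w r <= w s.

Lemma concave_modulus a b : 0 <= a < d -> 0 <= b < d -> `|w a - w b| <= w `|a - b|.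
Proof.
wlog ba : a b / b <= a.
  move=> hwlog ha hb; have [ba|ab] := leP b a; first exact: hwlog ba ha hb.
  by rewrite distrC (distrC a); apply: hwlog (ltW ab) hb ha.
move=> /andP[a0 ad] /andP[b0 bd].
rewrite (ger0_norm (_ : 0 <= a - b)) ?subr_ge0 // ger0_norm ?subr_ge0; last exact: w_mono.
have := concave_subadditive b0 ba ad; lra.
Qed.

End ConcaveModulus.

Lemma concave_near0_below (R : realType) (w : R -> R) (R0 : R) :
  0 < R0 -> concave_near0 w -> exists d, [/\ 0 < d, d <= R0 &
    forall x y t, 0 <= x < d -> 0 <= y < d -> 0 <= t <= 1 ->
      t * w x + (1 - t) * w y <= w (t * x + (1 - t) * y)].
Proof.
move=> R0_gt0 [d [d_gt0 w_concave]]; exists (Num.min d R0); split.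
- by rewrite lt_min d_gt0.
- by rewrite ge_min lexx orbT.
- move=> x y t; rewrite !lt_min => /and3P[x_ge0 x_ltd _] /and3P[y_ge0 y_ltd _].
  by apply: w_concave; rewrite ?x_ge0 ?y_ge0.
Qed.

Section Clamp.
Variable R : realDomainType.

Lemma max_lipschitz (a s t : R) : `|Num.max a s - Num.max a t| <= `|s - t|.
Proof.
have := ler_norm (s - t); have := ler_norm (t - s); rewrite distrC.
by case: (leP a s) => ?; case: (leP a t) => ?;
  rewrite ler_norml => *; apply/andP; split; lra.
Qed.

Lemma min_lipschitz (a s t : R) : `|Num.min a s - Num.min a t| <= `|s - t|.
Proof.
have := ler_norm (s - t); have := ler_norm (t - s); rewrite distrC.
by case: (leP a s) => ?; case: (leP a t) => ?;
  rewrite ler_norml => *; apply/andP; split; lra.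
Qed.

Definition clamp (m t : R) := Num.min m (Num.max 0 t).

Variable m : R.
Hypothesis m_ge0 : 0 <= m.

Lemma clamp_ge0 t : 0 <= clamp m t.
Proof. by rewrite le_min m_ge0 le_max lexx. Qed.

Lemma clamp_le t : clamp m t <= m.
Proof. by rewrite ge_min lexx. Qed.

Lemma clamp_id t : 0 <= t <= m -> clamp m t = t.
Proof. by move=> /andP[t0 tm]; rewrite /clamp (max_idPr t0) (min_idPr tm). Qed.

Lemma clamp_lipschitz s t : `|clamp m s - clamp m t| <= `|s - t|.
Proof. exact: le_trans (min_lipschitz _ _ _) (max_lipschitz _ _ _). Qed.

End Clamp.

Lemma coord_le_eucl (R : realType) n (v : 'rV[R]_n) i : `|v ord0 i| <= eucl v.
Proof.
rewrite /eucl -sqrtr_sqr ler_sqrt; last by apply: sumr_ge0 => j _; rewrite sqr_ge0.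
by rewrite (bigD1 i) //= lerDl; apply: sumr_ge0 => j _; rewrite sqr_ge0.
Qed.

Lemma eucl_scale_delta (R : realType) n (i : 'I_n) (r : R) :
  eucl (r *: delta_mx 0 i) = `|r|.
Proof.
rewrite /eucl (bigD1 i) //= big1 ?addr0 => [|j /negbTE ji]; rewrite !mxE ?ji.
  by rewrite !eqxx mulr1 sqrtr_sqr.
by rewrite andbF mulr0 expr0n.
Qed.

Section Seminorm.
Variables (R : realType) (n : nat) (Om : set 'rV[R]_n) (R0 : R) (w : R -> R).
Implicit Types (f : 'rV[R]_n -> R).

Lemma wsemi_le_wnorm f x0 : Om x0 -> (wsemi Om R0 w f <= wnorm Om R0 w f)%E.
Proof.
move=> Om_x0; apply: lee_paddr (lexx _).
apply: le_trans (_ : (`|f x0|%:E <= _)%E); first by rewrite lee_fin.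
by apply: ereal_sup_ubound; exists x0; split => //; exact: subset_closure.
Qed.

Hypothesis w_gt0 : forall r, 0 < r -> r < R0 -> 0 < w r.

Lemma wsemi_le f (C : R) :
  (forall x y r, Om x -> Om y -> eucl (x - y) <= r -> 0 < r -> r < R0 ->
    `|f x - f y| <= C * w r) ->
  (wsemi Om R0 w f <= C%:E)%E.
Proof.
move=> f_mod; apply: ge_ereal_sup => _ [r [r_gt0 r_lt ->]].
have wr_gt0 := w_gt0 r_gt0 r_lt.
have : (osc Om f r <= (C * w r)%:E)%E.
  by apply: ge_ereal_sup => _ [x [y [Ox Oy _ xy ->]]]; rewrite lee_fin; exact: f_mod.
move/(lee_wpmul2r (_ : (0 <= (w r)^-1%:E)%E)); rewrite -EFinM mulfK ?gt_eqF //.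
by apply; rewrite lee_fin invr_ge0 ltW.
Qed.

Lemma wsemi_ge_pair f x y r : Om x -> Om y -> 0 < eucl (x - y) -> eucl (x - y) <= r ->
  0 < r -> r < R0 -> ((`|f x - f y| / w r)%:E <= wsemi Om R0 w f)%E.
Proof.
move=> Ox Oy xy_gt0 xy_le r_gt0 r_lt.
have osc_ge : (`|f x - f y|%:E <= osc Om f r)%E.
  by apply: ereal_sup_ubound; exists x, y; split.
rewrite EFinM; apply: le_trans (lee_wpmul2r _ osc_ge) _.
  by rewrite lee_fin invr_ge0 ltW ?w_gt0.
by apply: ereal_sup_ubound; exists r.
Qed.

Lemma Dspace_modulus f : Dspace Om R0 w f -> exists2 K, 0 <= K &
  forall x y r, Om x -> Om y -> 0 < eucl (x - y) -> eucl (x - y) <= r ->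
    0 < r -> r < R0 -> `|f x - f y| <= K * w r.
Proof.
move=> [_ f_fin].
have [K K_ge0 fK] : exists2 K, 0 <= K & (wsemi Om R0 w f <= K%:E)%E.
  move: f_fin; case: (wsemi _ _ _ _) => [s _| // | _].
    by exists `|s|; rewrite // lee_fin ler_norm.
  by exists 0; rewrite ?leNye.
exists K => // x y r Ox Oy xy_gt0 xy_le r_gt0 r_lt.
have := le_trans (wsemi_ge_pair f Ox Oy xy_gt0 xy_le r_gt0 r_lt) fK.
by rewrite lee_fin ler_pdivrMr ?w_gt0.
Qed.

End Seminorm.

Lemma continuous_comp_within (T U V : topologicalType) (A : set U)
    (h : T -> U) (g : U -> V) :
  continuous h -> (forall x, A (h x)) -> {within A, continuous g} ->
  continuous (g \o h).
Proof.
move=> h_cont h_A g_cont x.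
have h_within : h @ x --> within A (nbhs (h x)).
  by move=> P /h_cont; apply: (@filterS _ (nbhs x)) => y /=; apply.
have g_within : g @ within A (nbhs (h x)) --> g (h x).
  by rewrite nbhs_subspace_in //; exact: g_cont.
exact: cvg_comp h_within g_within.
Qed.

Definition wramp (R : realType) n (w : R -> R) (m : R) (i : 'I_n) (x0 x : 'rV[R]_n) :=
  w (clamp m ((x - x0) ord0 i)).

Lemma ball_add_scale_delta (R : realType) n (x0 : 'rV[R]_n) (i : 'I_n) (e r : R) :
  0 <= r -> r < e -> ball x0 e (x0 + r *: delta_mx 0 i).
Proof.
move=> r_ge0 r_lte; split=> [|j k]; first exact: le_lt_trans r_lte.
rewrite -ball_normE /ball_ /= !mxE opprD addrA subrr add0r normrN.
by case: (_ && _); rewrite ?mulr1 ?mulr0 ?normr0 ?ger0_norm //; exact: le_lt_trans r_lte.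
Qed.

Section Ramp.
Variables (R : realType) (n : nat) (i : 'I_n) (x0 : 'rV[R]_n) (R0 d m : R).
Variable w : R -> R.
Hypothesis w_cont : {within [set r | 0 <= r < R0], continuous w}.
Hypothesis w_mono : forall r s, 0 <= r -> r <= s -> s < R0 -> w r <= w s.
Hypothesis w0 : w 0 = 0.
Hypothesis w_concave : forall x y t, 0 <= x < d -> 0 <= y < d -> 0 <= t <= 1 ->
  t * w x + (1 - t) * w y <= w (t * x + (1 - t) * y).
Hypothesis w_gt0 : forall r, 0 < r -> r < R0 -> 0 < w r.
Hypotheses (d_le_R0 : d <= R0) (m_gt0 : 0 < m) (m_lt_d : m < d).

Let ramp x := clamp m ((x - x0) ord0 i).
Let f := wramp w m i x0.

Lemma ramp_range x : 0 <= ramp x < d.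
Proof. by rewrite clamp_ge0 ?(ltW m_gt0) //= (le_lt_trans (clamp_le _ _) m_lt_d). Qed.

Lemma ramp_lipschitz x y : `|ramp x - ramp y| <= `|x ord0 i - y ord0 i|.
Proof.
apply: le_trans (clamp_lipschitz _ _ _) _.
by rewrite !mxE opprB addrA subrK.
Qed.

Lemma wramp_continuous : continuous f.
Proof.
have ramp_cont : continuous ramp.
  move=> x P /= /nbhs_ballP[e e_gt0 eP]; apply/nbhs_ballP; exists e => // y [_ xy].
  apply: eP; have := xy ord0 i; rewrite -!ball_normE /ball_ /=.
  exact: le_lt_trans (ramp_lipschitz _ _).
apply: continuous_comp_within ramp_cont _ w_cont => x /=.
by have /andP[-> /lt_le_trans ->] := ramp_range x.
Qed.

Lemma wramp_modulus x y r : eucl (x - y) <= r -> r < R0 -> `|f x - f y| <= w r.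
Proof.
move=> xy_le r_lt; have w_mono_d r' s : 0 <= r' -> r' <= s -> s < d -> w r' <= w s.
  by move=> r'_ge0 r's s_lt; apply: w_mono (lt_le_trans s_lt d_le_R0).
apply: le_trans (concave_modulus w_concave w0 w_mono_d (ramp_range x) (ramp_range y)) _.
apply: w_mono r_lt => //; apply: le_trans (ramp_lipschitz x y) (le_trans _ xy_le).
by have := coord_le_eucl (x - y) i; rewrite !mxE.
Qed.

Lemma wramp_center : f x0 = 0.
Proof. by rewrite /f /wramp subrr mxE clamp_id ?w0 ?lexx ?(ltW m_gt0). Qed.

Lemma wramp_shift r : 0 <= r <= m -> f (x0 + r *: delta_mx 0 i) = w r.
Proof.
move=> r_in; rewrite /f /wramp addrAC subrr add0r !mxE !eqxx mulr1.
by rewrite clamp_id ?(ltW m_gt0).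
Qed.

Lemma Dspace_wramp (Om : set 'rV[R]_n) : Dspace Om R0 w f.
Proof.
split; first exact: continuous_subspaceT wramp_continuous.
apply: le_lt_trans (ltry (1 : R)).
apply: (wsemi_le w_gt0 (C:=1)) => x y r _ _ xy_le _ r_lt; rewrite mul1r.
exact: wramp_modulus.
Qed.

Lemma wsemi_sub_wramp_ge (Om : set 'rV[R]_n) (R1 : R) (w1 : R -> R) g :
  open Om -> Om x0 -> 0 < R1 -> (forall r, 0 < r -> r < R1 -> 0 < w1 r) ->
  (fun r => w1 r / w r) @ 0^'+ --> 0 -> Dspace Om R1 w1 g ->
  ((1 / 2)%:E <= wsemi Om R0 w (fun x => f x - g x)%R)%E.
Proof.
move=> Om_open Om_x0 R1_gt0 w1_gt0 ratio0 Dg.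
have [e e_gt0 ball_Om] : exists2 e, 0 < e & ball x0 e `<=` Om.
  by have /nbhs_ballP[e] := open_nbhs_nbhs (conj Om_open Om_x0); exists e.
have [K K_ge0 g_mod] := Dspace_modulus w1_gt0 Dg.
have eps_gt0 : 0 < (2 * (K + 1))^-1 by rewrite invr_gt0; lra.
have [r [[r_gt0 r_lte r_ltm r_ltR1] r_ratio]] : exists r,
    [/\ 0 < r, r < e, r < m & r < R1] /\ `|0 - w1 r / w r| < (2 * (K + 1))^-1.
  near (0 : R)^'+ => r; exists r; split; first split.
  - by near: r; exact: nbhs_right_gt.
  - by near: r; exact: nbhs_right_lt e_gt0.
  - by near: r; exact: nbhs_right_lt m_gt0.
  - by near: r; exact: nbhs_right_lt R1_gt0.
  - by near: r; exact: cvgr_dist_lt ratio0 _ eps_gt0.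
  Unshelve. all: end_near.
have r_ltR0 : r < R0 by rewrite (lt_le_trans (lt_trans r_ltm m_lt_d)).
have wr_gt0 := w_gt0 r_gt0 r_ltR0.
have w1r_gt0 := w1_gt0 r r_gt0 r_ltR1.
have gK : K * w1 r <= w r / 2.
  move: r_ratio; rewrite sub0r normrN gtr0_norm ?divr_gt0 //.
  by rewrite ltr_pdivrMr // ltr_pdivlMl; lra.
pose x1 := x0 + r *: delta_mx 0 i.
have x1x0 : eucl (x1 - x0) = r by rewrite addrAC subrr add0r eucl_scale_delta gtr0_norm.
have x1_Om : Om x1 by apply/ball_Om/ball_add_scale_delta; rewrite ?ltW.
have x1x0_gt0 : 0 < eucl (x1 - x0) by rewrite x1x0.
have x1x0_le : eucl (x1 - x0) <= r by rewrite x1x0.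
have g_x1x0 := g_mod _ _ _ x1_Om Om_x0 x1x0_gt0 x1x0_le r_gt0 r_ltR1.
apply: le_trans (wsemi_ge_pair w_gt0 _ x1_Om Om_x0 x1x0_gt0 x1x0_le r_gt0 r_ltR0).
rewrite lee_fin ler_pdivlMr // wramp_shift ?wramp_center; last by rewrite !ltW.
by have := ler_norm (g x1 - g x0); have := ler_norm (w r - g x1 - (0 - g x0)); lra.
Qed.

End Ramp.

Theorem theorem2p7 (R : realType) (n : nat) (Om : set 'rV[R]_n)
    (R0 : R) (w : R -> R) (R1 : R) (w1 : R -> R) :
  (0 < n)%N -> open Om -> Om !=set0 -> bounded_eucl Om ->
  oscillation_function R0 w -> oscillation_function R1 w1 ->
  concave_near0 w ->
  (fun r => w1 r / w r) @ 0^'+ --> (0 : R) ->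
  ~ Ddense Om R0 w R1 w1.
Proof.
move=> n_gt0 Om_open [x0 Om_x0] _ [R0_gt0 w_cont w_mono w0 w_gt0]
  [R1_gt0 _ _ _ w1_gt0] w_concave_near0 ratio0 dense.
have [d [d_gt0 d_le_R0 w_concave]] := concave_near0_below R0_gt0 w_concave_near0.
have m_gt0 : 0 < d / 2 by rewrite divr_gt0.
have m_lt_d : d / 2 < d by rewrite ltr_pdivrMr //; lra.
pose i := Ordinal n_gt0.
have Df := Dspace_wramp i x0 w_cont w_mono w0 w_concave w_gt0 d_le_R0 m_gt0 m_lt_d Om.
have half_gt0 : 0 < 1 / 2 :> R by lra.
have [g [Dg fg_close]] := dense _ Df _ half_gt0.
have fg_far := wsemi_sub_wramp_ge i w0 w_gt0 d_le_R0 m_gt0 m_lt_d Om_open Om_x0 R1_gt0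
  w1_gt0 ratio0 Dg.
have := lt_le_trans fg_close (le_trans fg_far (wsemi_le_wnorm _ _ _ Om_x0)).
by rewrite ltxx.
Qed.
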